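(* Let $\underline{\mathbf{r}}=(\underline r_1,\dots,\underline r_{n_1})$ and $\mathbf{c}=(c_1,\dots,c_{n_2})$ be non-increasing integer vectors and $\overline{\mathbf{r}}=(\overline r_1,\dots,\overline r_{n_1})$, $\overline{\mathbf{c}}=(\overline c_1,\dots,\overline c_{n_2})$ integer vectors with $\underline{\mathbf{r}}\le\overline{\mathbf{r}}$ and $\mathbf{c}\le\overline{\mathbf{c}}$, such that $(\underline{\mathbf{r}},\overline{\mathbf{r}},\mathbf{c},\overline{\mathbf{c}})$ is realizable and $(\underline{\mathbf{r}},\overline{\mathbf{r}},\mathbf{c},\mathbf{c})$ is not realizable. Then there is a right-most position $i$ with $c_i<\overline c_i$. Let $j$ be the left-most position with $c_j=c_i$, and define $\mathbf{a}=(a_1,\dots,a_{n_2})$, $\overline{\mathbf{a}}=(\overline a_1,\dots,\overline a_{n_2})$ by $a_j=c_j+1$, $a_k=c_k$ for $k\ne j$; and $\overline a_j=\overline c_i$, $\overline a_i=\overline c_j$, $\overline a_k=\overline c_k$ for $k\notin\{i,j\}$. Then $\mathbf{a}$ is non-increasing, $\mathbf{a}\le\overline{\mathbf{a}}$, and $(\underline{\mathbf{r}},\overline{\mathbf{r}},\mathbf{a},\overline{\mathbf{a}})$ is realizable.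
   Context: Inequalities between vectors are componentwise. A four-tuple $(\underline{\mathbf{r}},\overline{\mathbf{r}},\underline{\mathbf{c}},\overline{\mathbf{c}})$ of integer vectors (first two of length $n_1$, last two of length $n_2$) is realizable if there is a bipartite graph $G=(U,V,E)$ with $U=\{u_1,\dots,u_{n_1}\}$, $V=\{v_1,\dots,v_{n_2}\}$ such that $\underline r_i\le d_G(u_i)\le\overline r_i$ and $\underline c_j\le d_G(v_j)\le\overline c_j$ for all $i,j$. *)

From mathcomp Require Import all_boot all_order all_algebra.
Set Implicit Arguments. Unset Strict Implicit. Unset Printing Implicit Defensive.
Import Order.TTheory GRing.Theory Num.Theory.
Local Open Scope ring_scope.

(* Integer vectors of length n are functions 'I_n -> int (positions 0..n-1). *)

Definition vle (n : nat) (x y : 'I_n -> int) : Prop := forall k, x k <= y k.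

Definition nonincreasing (n : nat) (x : 'I_n -> int) : Prop :=
  forall k l : 'I_n, (k <= l)%N -> x l <= x k.

(* A bipartite graph G=(U,V,E) with U = 'I_n1, V = 'I_n2 is given by its
   edge set E : {set 'I_n1 * 'I_n2} (simple graph). *)
Definition degU (n1 n2 : nat) (E : {set 'I_n1 * 'I_n2}) (i : 'I_n1) : nat :=
  #|[set j : 'I_n2 | (i, j) \in E]|.
Definition degV (n1 n2 : nat) (E : {set 'I_n1 * 'I_n2}) (j : 'I_n2) : nat :=
  #|[set i : 'I_n1 | (i, j) \in E]|.

Definition realizable (n1 n2 : nat) (rl ru : 'I_n1 -> int) (cl cu : 'I_n2 -> int)
  : Prop :=
  exists E : {set 'I_n1 * 'I_n2},
    (forall i, rl i <= (degU E i)%:Z <= ru i) /\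
    (forall j, cl j <= (degV E j)%:Z <= cu j).

Definition avec (n : nat) (c : 'I_n -> int) (j : 'I_n) : 'I_n -> int :=
  fun k => if k == j then c j + 1 else c k.
Definition abarvec (n : nat) (cbar : 'I_n -> int) (i j : 'I_n) : 'I_n -> int :=
  fun k => if k == j then cbar i else if k == i then cbar j else cbar k.

From mathcomp Require Import all_boot all_order all_algebra.
From mathcomp Require Import all_fingroup.
From mathcomp Require Import zify.
Set Implicit Arguments. Unset Strict Implicit. Unset Printing Implicit Defensive.
Import Order.TTheory GRing.Theory Num.Theory.
Local Open Scope ring_scope.

(* Exchanging columns i and j of a graph realizing (rl, ru, c, cbar) exchanges
   the upper bounds cbar_i and cbar_j; as c_i = c_j the lower bounds are kept.
   If column j then has degree above c_j we are done.  Otherwise, since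
   (rl, ru, c, c) is not realizable, some column k has degree above c_k.  Right
   of i the upper bound is c itself, so k <= i and c_k >= c_i = c_j: column k
   has more neighbours than column j, and moving one edge from k to j raises
   the degree of j by one while keeping every other bound. *)

Section Realization.

Variables n1 n2 : nat.
Implicit Types (E : {set 'I_n1 * 'I_n2}) (s : {perm 'I_n2}).

Definition realizes E (rl ru : 'I_n1 -> int) (cl cu : 'I_n2 -> int) : Prop :=
  (forall i, rl i <= (degU E i)%:Z <= ru i) /\
  (forall j, cl j <= (degV E j)%:Z <= cu j).

Definition colperm E s := [set p | (p.1, s p.2) \in E].

Lemma degU_colperm E s : degU (colperm E s) =1 degU E.
Proof.
move=> u; rewrite /degU -(card_preimset [set l | (u, l) \in E] (@perm_inj _ s)).
by apply: eq_card => l; rewrite !inE.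
Qed.

Lemma degV_colperm E s l : degV (colperm E s) l = degV E (s l).
Proof. by apply: eq_card => u; rewrite !inE. Qed.

Lemma move_edge E (u : 'I_n1) (k j : 'I_n2) :
    (u, k) \in E -> (u, j) \notin E ->
  exists G, [/\ degU G =1 degU E, degV G j = (degV E j).+1,
    (degV G k).+1 = degV E k &
    forall l, l != j -> l != k -> degV G l = degV E l].
Proof.
move=> ukE ujE.
exists [set p | if p.1 == u then (u, tperm k j p.2) \in E else p \in E].
split.
- move=> v; rewrite /degU; case: (eqVneq v u) => [->|vu].
    rewrite -(card_preimset [set l | (u, l) \in E] (@perm_inj _ (tperm k j))).
    by apply: eq_card => l; rewrite !inE eqxx.
  by apply: eq_card => l; rewrite !inE /= (negbTE vu).
- have := cardsU1 u [set v | (v, j) \in E]; rewrite inE ujE add1n => <-.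
  apply: eq_card => v; rewrite !inE /= tpermR.
  by case: (eqVneq v u) => [->|]; rewrite ?orTb.
- rewrite /degV (cardsD1 u [set v | (v, k) \in E]) inE ukE add1n.
  congr _.+1; apply: eq_card => v; rewrite !inE /= tpermL.
  by case: (eqVneq v u) => [->|]; rewrite ?(negbTE ujE).
- move=> l lj lk; apply: eq_card => v; rewrite !inE /= tpermD 1?eq_sym //.
  by case: (eqVneq v u) => [->|].
Qed.

Lemma degV_transfer E (k j : 'I_n2) : (degV E j < degV E k)%N ->
  exists G, [/\ degU G =1 degU E, degV G j = (degV E j).+1,
    (degV G k).+1 = degV E k &
    forall l, l != j -> l != k -> degV G l = degV E l].
Proof.
move=> ltjk.
have : ~~ ([set v | (v, k) \in E] \subset [set v | (v, j) \in E]).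
  by apply: contraTN ltjk => /subset_leq_card; rewrite -leqNgt.
by case/subsetPn=> u; rewrite !inE; apply: move_edge.
Qed.

Variables (rl ru : 'I_n1 -> int).

Lemma realizes_colperm E s (cl cu cl' cu' : 'I_n2 -> int) :
    (forall l, cl' l = cl (s l)) -> (forall l, cu' l = cu (s l)) ->
  realizes E rl ru cl cu -> realizes (colperm E s) rl ru cl' cu'.
Proof.
move=> ecl ecu [Er Ec]; split=> [u|l]; first by rewrite degU_colperm.
by rewrite degV_colperm ecl ecu.
Qed.

Lemma realizes_tighten E (cl cu cu' : 'I_n2 -> int) :
    (forall l, (degV E l)%:Z <= cu' l) ->
  realizes E rl ru cl cu -> realizes E rl ru cl cu'.
Proof. by move=> Ecu' [Er Ec]; split=> // l; have := Ec l; have := Ecu' l; lia. Qed.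

Lemma realizes_lt_cu E (cl cu : 'I_n2 -> int) (k : 'I_n2) :
  realizes E rl ru cl cu -> cl k < (degV E k)%:Z -> cl k < cu k.
Proof. by case=> _ /(_ k) /andP[_ le_cu] /lt_le_trans; apply. Qed.

Lemma exists_degV_gt E (c cu : 'I_n2 -> int) :
    realizes E rl ru c cu -> ~ realizable rl ru c c ->
  exists k, c k < (degV E k)%:Z.
Proof.
move=> rE nreal.
case: (boolP [exists k, c k < (degV E k)%:Z]) => [/existsP //|/existsPn Ec].
case: nreal; exists E; apply: realizes_tighten rE => l.
by rewrite leNgt Ec.
Qed.

Lemma realizable_incr_lower E (cl cu : 'I_n2 -> int) (j k : 'I_n2) :
    realizes E rl ru cl cu -> cl j < cu j ->
    cl k < (degV E k)%:Z -> cl j <= cl k ->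
  realizable rl ru (avec cl j) cu.
Proof.
move=> [Er Ec] ltj ltk lejk; rewrite /avec.
have [gtj|lej] := ltP (cl j) (degV E j)%:Z.
  by exists E; split=> // l; have := Ec l; case: eqVneq => [->|_] //; lia.
have [|G [GU Gj Gk Gl]] := @degV_transfer E k j.
  by have := Ec j; have := Ec k; lia.
exists G; split=> [u|l]; first by rewrite GU.
case: (eqVneq l j) => [->|lj]; first by rewrite Gj; have := Ec j; lia.
case: (eqVneq l k) => [->|lk]; first by have := Ec k; lia.
by rewrite Gl //; apply: Ec.
Qed.

End Realization.

Lemma nonincreasing_avec (n : nat) (c : 'I_n -> int) (j : 'I_n) :
    nonincreasing c -> (forall k, c k = c j -> (j <= k)%N) ->
  nonincreasing (avec c j).
Proof.
move=> cdec jmin k l kl; have ckl := cdec _ _ kl; rewrite /avec.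
case: (eqVneq k j) => [kj|kj]; case: (eqVneq l j) => [lj|lj].
- by [].
- by rewrite kj in ckl; lia.
- have : c k != c j.
    by apply: contra kj => /eqP /jmin jk; rewrite -val_eqE eqn_leq jk -lj kl.
  by rewrite lj in ckl; lia.
- exact: ckl.
Qed.

Lemma vle_avec_abarvec (n : nat) (c cbar : 'I_n -> int) (i j : 'I_n) :
    vle c cbar -> c i < cbar i -> c j = c i ->
  vle (avec c j) (abarvec cbar i j).
Proof.
move=> ccb lti cji k; rewrite /avec /abarvec.
case: (eqVneq k j) => [_|_]; first by rewrite cji; lia.
by case: (eqVneq k i) => [->|_]; rewrite -?cji; apply: ccb.
Qed.

Lemma abarvec_tperm (n : nat) (cbar : 'I_n -> int) (i j l : 'I_n) :
  abarvec cbar i j l = cbar (tperm i j l).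
Proof.
rewrite /abarvec; case: (eqVneq l j) => [->|lj]; first by rewrite tpermR.
by case: (eqVneq l i) => [->|li]; rewrite ?tpermL // tpermD // eq_sym.
Qed.

Theorem lemma1 (n1 n2 : nat) (rl ru : 'I_n1 -> int) (c cbar : 'I_n2 -> int) :
  nonincreasing rl -> nonincreasing c ->
  vle rl ru -> vle c cbar ->
  realizable rl ru c cbar ->
  ~ realizable rl ru c c ->
  (exists i : 'I_n2, c i < cbar i /\ (forall k : 'I_n2, c k < cbar k -> (k <= i)%N))
  /\
  (forall i j : 'I_n2,
     c i < cbar i -> (forall k : 'I_n2, c k < cbar k -> (k <= i)%N) ->
     c j = c i -> (forall k : 'I_n2, c k = c i -> (j <= k)%N) ->
     [/\ nonincreasing (avec c j),
         vle (avec c j) (abarvec cbar i j) &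
         realizable rl ru (avec c j) (abarvec cbar i j)]).
Proof.
move=> _ cdec _ ccb [E rE] nreal; split.
  have [k0 ltk0] := exists_degV_gt rE nreal.
  have slack0 := realizes_lt_cu rE ltk0.
  by case: (@arg_maxnP _ k0 (fun k => c k < cbar k) val slack0) => i; exists i.
move=> i j slacki imax cji jmin; split.
- by apply: nonincreasing_avec => // k; rewrite cji; apply: jmin.
- exact: vle_avec_abarvec.
have cperm l : c l = c (tperm i j l).
  by case: (tpermP i j l) => [->|->|] //; rewrite cji.
have rF := realizes_colperm cperm (abarvec_tperm cbar i j) rE.
have [k ltk] := exists_degV_gt rF nreal.
have ki : (k <= i)%N.
  rewrite leqNgt; apply/negP => ik.
  have [nik njk] : i != k /\ j != k.
    by split; apply: contraTneq ik => <-; rewrite -?leqNgt ?ltnn //; apply: jmin.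
  have := realizes_lt_cu rF ltk; rewrite abarvec_tperm tpermD // => /imax.
  by rewrite leqNgt ik.
apply: realizable_incr_lower rF _ ltk _.
  by rewrite abarvec_tperm tpermR cji.
by rewrite cji; apply: cdec.
Qed.
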